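(* Let $a\in\mathbb{Z}$, $b\in\mathbb{Z}_{>0}$, $x(1)\in\mathbb{R}$, and $p(1)=a/b$. Define $(p(i),x(i))_{i\ge1}$ by $$p(i+1)=p(i)-\operatorname{sgn}x(i),\qquad x(i+1)=x(i)+p(i)-\operatorname{sgn}x(i).$$ Then the sequence $(x(i))_{i\ge 1}$ is bounded if and only if there exists $k\ge 1$ with $(p(k+1),x(k+1))=(p(1),x(1))$ (in which case the whole sequence $(p(i),x(i))$ is periodic with period $k$).
   Context: Here $\operatorname{sgn}(x)=x/|x|$ for $x\neq 0$ and $\operatorname{sgn}(0)=0$. *)

From Stdlib Require Import Reals ZArith.
Open Scope R_scope.

Definition sgn (x : R) : R :=
  if Req_EM_T x 0 then 0 else x / Rabs x.

Definition step (s : R * R) : R * R :=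
  let (p, x) := s in (p - sgn x, x + p - sgn x).

(* orb p1 x1 n = (p(n+1), x(n+1)), i.e. the state after n steps
   starting from (p(1), x(1)) = (p1, x1). *)
Fixpoint orb (p1 x1 : R) (n : nat) : R * R :=
  match n with
  | O => (p1, x1)
  | S n' => step (orb p1 x1 n')
  end.

Definition pseq (p1 x1 : R) (i : nat) : R := fst (orb p1 x1 (i - 1)).
Definition xseq (p1 x1 : R) (i : nat) : R := snd (orb p1 x1 (i - 1)).

From Stdlib Require Import Reals ZArith List Lia Lra Classical.
Open Scope R_scope.

(* Since p(1) = a/b and sgn takes integer values, every state (p(n), x(n))
   lies on the lattice (Z/b) x (x(1) + Z/b).  The step map is injective,
   since x(n) = x(n+1) - p(n+1) and p(n) = p(n+1) + sgn x(n).  If x is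
   bounded, so is p(n+1) = x(n+1) - x(n); the orbit then stays in a finite
   part of the lattice, must repeat a state, and by injectivity returns to
   its first one.  Conversely a periodic orbit takes finitely many values. *)

Section InjectiveIteration.

Variables (A : Type) (f : A -> A).
Hypothesis f_inj : forall u v, f u = f v -> u = v.

Lemma iter_injective n u v : Nat.iter n f u = Nat.iter n f v -> u = v.
Proof.
  induction n as [|n IH]; simpl; intro E; [exact E|].
  apply IH, f_inj, E.
Qed.

Lemma iter_return_of_repeat s i d :
  Nat.iter (i + d) f s = Nat.iter i f s -> Nat.iter d f s = s.
Proof. rewrite Nat.iter_add. apply iter_injective. Qed.

End InjectiveIteration.

Lemma iter_mod_period (A : Type) (f : A -> A) s k n :
  Nat.iter k f s = s -> Nat.iter n f s = Nat.iter (n mod k) f s.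
Proof.
  intro Ek.
  assert (Eq : forall q, Nat.iter (q * k) f s = s).
  { induction q as [|q IH]; [reflexivity|].
    replace (S q * k)%nat with (q * k + k)%nat by lia.
    now rewrite Nat.iter_add, Ek, IH. }
  assert (Hn : n = (n mod k + n / k * k)%nat)
    by (pose proof (Nat.div_mod_eq n k); lia).
  transitivity (Nat.iter (n mod k + n / k * k) f s); [now f_equal|].
  now rewrite Nat.iter_add, Eq.
Qed.

Lemma repeat_of_finite_range (A : Type) (u : nat -> A) (L : list A) :
  (forall n, In (u n) L) -> exists i j, (i < j)%nat /\ u i = u j.
Proof.
  intro HL. apply NNPP. intro Hnorep.
  set (l := map u (seq 0 (S (length L)))).
  assert (ND : NoDup l).
  { apply NoDup_map_NoDup_ForallPairs; [|apply seq_NoDup].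
    intros i j _ _ E.
    destruct (Nat.lt_trichotomy i j) as [h|[h|h]]; [| exact h |];
      exfalso; apply Hnorep; eauto. }
  assert (INC : incl l L).
  { intros z Hz. apply in_map_iff in Hz. destruct Hz as [n [<- _]]. apply HL. }
  pose proof (NoDup_incl_length ND INC) as Hlen.
  unfold l in Hlen. rewrite length_map, length_seq in Hlen. lia.
Qed.

Definition Zbox (N : Z) : list Z :=
  map (fun k => Z.of_nat k - N)%Z (seq 0 (Z.to_nat (2 * N))).

Lemma In_Zbox N z : (Z.abs z < N)%Z -> In z (Zbox N).
Proof.
  intro hz. apply in_map_iff. exists (Z.to_nat (z + N)). split.
  - lia.
  - apply in_seq. lia.
Qed.

Lemma bounded_on_initial_segment (g : nat -> R) k :
  exists M, forall r, (r < k)%nat -> Rabs (g r) <= M.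
Proof.
  induction k as [|k [M HM]].
  - exists 0. intros r hr. lia.
  - exists (Rmax M (Rabs (g k))). intros r hr.
    destruct (Nat.eq_dec r k) as [->|ne].
    + apply Rmax_r.
    + eapply Rle_trans; [apply HM; lia | apply Rmax_l].
Qed.

Lemma sgn_integer x : exists z : Z, sgn x = IZR z.
Proof.
  unfold sgn. destruct (Req_EM_T x 0) as [_|nz]; [now exists 0%Z|].
  destruct (Rlt_or_le x 0) as [h|h].
  - exists (-1)%Z. rewrite Rabs_left by lra. field. lra.
  - exists 1%Z. rewrite Rabs_right by lra. field. lra.
Qed.

Lemma step_injective s t : step s = step t -> s = t.
Proof.
  destruct s as [p x], t as [q y]; simpl; intro E; injection E as Ep Ex.
  assert (x = y) by lra. subst y. f_equal. lra.
Qed.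

Lemma orb_iter p1 x1 n : orb p1 x1 n = Nat.iter n step (p1, x1).
Proof. induction n as [|n IH]; simpl; congruence. Qed.

Lemma orb_succ_fst p1 x1 n :
  fst (orb p1 x1 (S n)) = snd (orb p1 x1 (S n)) - snd (orb p1 x1 n).
Proof. simpl. destruct (orb p1 x1 n) as [p x]. simpl. ring. Qed.

Lemma orb_on_lattice (a b : Z) x1 n : IZR b <> 0 ->
  exists u v : Z, orb (IZR a / IZR b) x1 n = (IZR u / IZR b, x1 + IZR v / IZR b).
Proof.
  intro hb. induction n as [|n [u [v IH]]].
  - exists a, 0%Z. simpl. f_equal. field. exact hb.
  - destruct (sgn_integer (x1 + IZR v / IZR b)) as [z Hz].
    exists (u - z * b)%Z, (v + u - z * b)%Z. simpl. rewrite IH. simpl. rewrite Hz.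
    rewrite !minus_IZR, plus_IZR, mult_IZR. f_equal; field; exact hb.
Qed.

Lemma orb_fst_bound p1 x1 M :
  (forall n, Rabs (snd (orb p1 x1 n)) <= M) ->
  forall n, Rabs (fst (orb p1 x1 n)) <= Rabs p1 + 2 * M.
Proof.
  intros HX [|n].
  - simpl. pose proof (Rabs_pos x1). pose proof (HX O). simpl in *. lra.
  - rewrite orb_succ_fst. unfold Rminus.
    pose proof (Rabs_triang (snd (orb p1 x1 (S n))) (- snd (orb p1 x1 n))) as Htri.
    rewrite Rabs_Ropp in Htri.
    pose proof (HX (S n)). pose proof (HX n). pose proof (Rabs_pos p1). lra.
Qed.

Lemma bounded_orbit_in_finite_set (a b : Z) x1 M : (0 < b)%Z ->
  (forall n, Rabs (snd (orb (IZR a / IZR b) x1 n)) <= M) ->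
  exists L, forall n, In (orb (IZR a / IZR b) x1 n) L.
Proof.
  set (p1 := IZR a / IZR b). intros hb HX.
  assert (Hb : 0 < IZR b) by (apply IZR_lt; exact hb).
  assert (M0 : 0 <= M) by (eapply Rle_trans; [apply Rabs_pos | apply (HX O)]).
  pose proof (orb_fst_bound p1 x1 M HX) as HP.
  set (r := IZR b * (Rabs p1 + 2 * M + Rabs x1)).
  destruct (archimed r) as [Hup _].
  exists (map (fun uv => (IZR (fst uv) / IZR b, x1 + IZR (snd uv) / IZR b))
              (list_prod (Zbox (up r)) (Zbox (up r)))).
  intro n. destruct (orb_on_lattice a b x1 n) as [u [v Huv]]; [lra|].
  fold p1 in Huv. rewrite Huv. apply in_map_iff. exists (u, v). split; [reflexivity|].
  assert (Hbox : forall w, Rabs (IZR w / IZR b) <= Rabs p1 + 2 * M + Rabs x1 ->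
                           In w (Zbox (up r))).
  { intros w hw. apply In_Zbox, lt_IZR. rewrite abs_IZR.
    replace (IZR w) with (IZR b * (IZR w / IZR b)) by (field; lra).
    rewrite Rabs_mult, (Rabs_right (IZR b)) by lra.
    eapply Rle_lt_trans; [|exact Hup]. apply Rmult_le_compat_l; lra. }
  pose proof (HP n) as Hu. pose proof (HX n) as Hv. rewrite Huv in Hu, Hv. simpl in Hu, Hv.
  pose proof (Rabs_triang (x1 + IZR v / IZR b) (- x1)) as Htri.
  rewrite Rabs_Ropp in Htri. replace (x1 + IZR v / IZR b + - x1) with (IZR v / IZR b) in Htri by ring.
  pose proof (Rabs_pos x1). pose proof (Rabs_pos p1).
  apply in_prod; apply Hbox; lra.
Qed.

Lemma bounded_orbit_returns (a b : Z) x1 M : (0 < b)%Z ->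
  (forall n, Rabs (snd (orb (IZR a / IZR b) x1 n)) <= M) ->
  exists k, (1 <= k)%nat /\ orb (IZR a / IZR b) x1 k = orb (IZR a / IZR b) x1 0.
Proof.
  intros hb HX.
  destruct (bounded_orbit_in_finite_set a b x1 M hb HX) as [L HL].
  destruct (repeat_of_finite_range _ _ L HL) as [i [j [hij E]]].
  exists (j - i)%nat. split; [lia|].
  rewrite !orb_iter in *. apply (iter_return_of_repeat _ step step_injective _ i).
  now replace (i + (j - i))%nat with j by lia.
Qed.

Lemma periodic_orbit_bounded p1 x1 k : (1 <= k)%nat -> orb p1 x1 k = orb p1 x1 0 ->
  exists M, forall n, Rabs (snd (orb p1 x1 n)) <= M.
Proof.
  intros hk Ek.
  destruct (bounded_on_initial_segment (fun r => snd (orb p1 x1 r)) k) as [M HM].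
  exists M. intro n. rewrite !orb_iter in *.
  rewrite (iter_mod_period _ _ _ k n Ek).
  rewrite <- orb_iter. apply HM, Nat.mod_upper_bound. lia.
Qed.

Lemma xseq_bounded_iff p1 x1 M :
  (forall i, (1 <= i)%nat -> Rabs (xseq p1 x1 i) <= M) <->
  (forall n, Rabs (snd (orb p1 x1 n)) <= M).
Proof.
  unfold xseq. split; intros H n.
  - replace n with (S n - 1)%nat by lia. apply H. lia.
  - intros _. apply H.
Qed.

Lemma return_to_start_iff p1 x1 k :
  pseq p1 x1 (k + 1) = pseq p1 x1 1 /\ xseq p1 x1 (k + 1) = xseq p1 x1 1 <->
  orb p1 x1 k = orb p1 x1 0.
Proof.
  unfold pseq, xseq. replace (k + 1 - 1)%nat with k by lia. simpl.
  destruct (orb p1 x1 k) as [p x]. simpl. split.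
  - now intros [-> ->].
  - intro E. injection E. auto.
Qed.

Theorem mainTheorem4 (a b : Z) (x1 : R) (hb : (0 < b)%Z) :
  let p1 := IZR a / IZR b in
  (exists M : R, forall i : nat, (1 <= i)%nat -> Rabs (xseq p1 x1 i) <= M) <->
  (exists k : nat, (1 <= k)%nat /\
     pseq p1 x1 (k + 1) = pseq p1 x1 1 /\ xseq p1 x1 (k + 1) = xseq p1 x1 1).
Proof.
  intro p1. split.
  - intros [M HM]. rewrite xseq_bounded_iff in HM.
    destruct (bounded_orbit_returns a b x1 M hb HM) as [k [hk Ek]].
    exists k. split; [exact hk|]. now apply return_to_start_iff.
  - intros [k [hk Ek]]. rewrite return_to_start_iff in Ek.
    destruct (periodic_orbit_bounded p1 x1 k hk Ek) as [M HM].
    exists M. now apply xseq_bounded_iff.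
Qed.
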